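(* Let $m/n\in(0,1/2)$ in lowest terms, write $c_{m/n}=1\,0^{\kappa_1}\,11\,0^{\kappa_2}\,11\cdots11\,0^{\kappa_m}\,1$, and let $1\le r\le m$. Then the word $c=1\,0^{\kappa_r+1}\,11\,0^{\kappa_{r+1}}\,11\cdots11\,0^{\kappa_m}\,1$ disagrees with $c_{m/n}$ at some position within the shorter of their two lengths, and $c$ is greater than $c_{m/n}$ in the unimodal order.
   Context: $\kappa_1=\lfloor n/m\rfloor-1$ and $\kappa_i=\lfloor in/m\rfloor-\lfloor(i-1)n/m\rfloor-2$ for $2\le i\le m$. The unimodal order $\prec$ on words over $\{0,1\}$ which disagree within their common length: if $j$ is the first index with $s_j\ne t_j$, then $s\prec t$ iff either $s_0\cdots s_{j-1}$ contains an even number of $1$s and $s_j<t_j$, or an odd number of $1$s and $s_j>t_j$. *)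

From mathcomp Require Import all_boot.
Set Implicit Arguments. Unset Strict Implicit. Unset Printing Implicit Defensive.

(* Words over {0,1} are encoded as seq bool, with true = 1 and false = 0. *)

Definition kappa (m n i : nat) : nat :=
  if i == 1 then n %/ m - 1 else (i * n) %/ m - ((i - 1) * n) %/ m - 2.

Definition sep (m i : nat) : seq bool :=
  if i < m then [:: true; true] else [:: true].

Definition tailw (m n r : nat) : seq bool :=
  flatten [seq nseq (kappa m n i) false ++ sep m i | i <- iota r (m - r + 1)].

Definition cmn (m n : nat) : seq bool := true :: tailw m n 1.

Definition cr (m n r : nat) : seq bool := true :: false :: tailw m n r.

Definition disagree (s t : seq bool) : Prop :=
  exists j, j < minn (size s) (size t) /\ nth false s j != nth false t j.

Definition unimodal_lt (s t : seq bool) : Prop :=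
  exists j, [/\ j < size s, j < size t,
     (forall k, k < j -> nth false s k = nth false t k),
     nth false s j != nth false t j &
     (if ~~ odd (count id (take j s))
      then (nth false s j < nth false t j)
      else (nth false s j > nth false t j))].

From mathcomp Require Import all_boot zify.

(* Write g_i = floor(i n/m) - floor((i-1) n/m), so that kappa_1 = g_1 - 1 and
   kappa_i = g_i - 2 otherwise.  Both words are 1 followed by blocks 0^a 11 (the
   last one 0^a 1); up to the first block where they differ, the common prefix
   contains an odd number of ones, so the word whose differing block has fewer
   zeros is the smaller one.  For r = 1 this happens in the first block.  For
   r >= 2 compare g_(1+t) with g_(r+t): with y_t = t n mod m,
   g_(t+1) = floor(n/m) + [y_t + (n mod m) >= m], and as long as the gaps agree
   y_(r-1+t) = y_t + y_(r-1), where y_(r-1) > 0 by coprimality.  Hence at the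
   first disagreement g_(r+t) is the larger gap, and a disagreement occurs at the
   latest at t = m - r, because y_(m-1) + (n mod m) = m. *)

Lemma unimodal_lt_disagree (s t : seq bool) : unimodal_lt s t -> disagree t s.
Proof.
by case=> j [js jt _ neq _]; exists j; rewrite leq_min jt js eq_sym.
Qed.

Lemma unimodal_lt_cat (p s t : seq bool) (x y : bool) :
  (if ~~ odd (count id p) then x < y else y < x) ->
  unimodal_lt (p ++ x :: s) (p ++ y :: t).
Proof.
move=> xy; exists (size p); rewrite !size_cat /= !addnS !ltnS !leq_addr.
rewrite !nth_cat ltnn subnn take_size_cat //; split=> //.
- by move=> k lt_kp; rewrite !nth_cat lt_kp.
- by case: ifP xy; case: x; case: y.
Qed.

Definition zero_block (b : nat * seq bool) : seq bool := nseq b.1 false ++ b.2.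

Definition blocks (l : seq (nat * seq bool)) : seq bool := flatten (map zero_block l).

Definition all_sep11 (l : seq (nat * seq bool)) : bool :=
  all (fun b => b.2 == [:: true; true]) l.

Lemma count_blocks_sep11 l : all_sep11 l -> count id (blocks l) = (size l).*2.
Proof.
elim: l => [|[a s] l IHl] //= /andP[/eqP/= s11 /IHl count_l].
rewrite /blocks /= count_cat -/(blocks l) count_l count_cat count_nseq s11.
by rewrite mul0n doubleS.
Qed.

Lemma unimodal_lt_blocks_cat p l1 l2 a b s1 s2 :
  all_sep11 p -> a < b -> head false s1 ->
  unimodal_lt (true :: blocks (p ++ (a, s1) :: l1))
              (true :: blocks (p ++ (b, s2) :: l2)).
Proof.
case: s1 => [|x s1] //= p11 lt_ab ->.
rewrite /blocks !map_cat !flatten_cat /= /zero_block /=; set q := flatten _.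
have -> : nseq b false = nseq a false ++ false :: nseq (b - a.+1) false.
  by rewrite -[false :: _]/(nseq 1 false ++ _) catA -!nseqD; congr nseq; lia.
have := unimodal_lt_cat (true :: q ++ nseq a false)
  (s1 ++ blocks l1) (nseq (b - a.+1) false ++ s2 ++ blocks l2) true false.
rewrite /= -!catA; apply.
by rewrite count_cat count_nseq mul0n addn0 count_blocks_sep11 // odd_double.
Qed.

Lemma unimodal_lt_blocks l1 l2 j :
  j < size l1 -> j < size l2 ->
  (forall i, i < j -> nth (0, [::]) l1 i = nth (0, [::]) l2 i) ->
  (forall i, i < j -> (nth (0, [::]) l1 i).2 = [:: true; true]) ->
  (nth (0, [::]) l1 j).1 < (nth (0, [::]) l2 j).1 ->
  head false (nth (0, [::]) l1 j).2 ->
  unimodal_lt (true :: blocks l1) (true :: blocks l2).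
Proof.
move=> j1 j2 eq12 sep1 lt_j head_j.
rewrite -(cat_take_drop j l1) -(cat_take_drop j l2).
rewrite (drop_nth (0, [::]) j1) (drop_nth (0, [::]) j2).
have -> : take j l2 = take j l1.
  apply: (@eq_from_nth _ (0, [::])) => [|i]; first by rewrite !size_take j1 j2.
  by rewrite size_take j2 => lt_ij; rewrite !nth_take // eq12.
move: lt_j head_j; case: (nth _ l1 j) => a s1; case: (nth _ l2 j) => b s2 /=.
apply: unimodal_lt_blocks_cat; apply/(all_nthP (0, [::])) => i.
by rewrite size_take j1 => lt_ij; rewrite nth_take // sep1.
Qed.

Section Gaps.

Variables m n : nat.
Hypothesis m_gt0 : 0 < m.

Definition gap (i : nat) : nat := (i * n) %/ m - ((i - 1) * n) %/ m.

Definition resid (t : nat) : nat := (t * n) %% m.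

Lemma gapS t : gap t.+1 = n %/ m + (m <= resid t + n %% m).
Proof.
rewrite /gap /resid subn1 /= mulSn divnD // [n %% m + _]addnC.
by rewrite addnAC addnK.
Qed.

Lemma residS t : resid t.+1 = resid t + n %% m - m * (m <= resid t + n %% m).
Proof.
rewrite /resid mulSn addnC -modnDm.
have lt_tn := ltn_pmod (t * n) m_gt0; have lt_n := ltn_pmod n m_gt0.
case: leqP => [wrap | no_wrap]; last by rewrite muln0 subn0 modn_small.
rewrite muln1 -{1}(subnK wrap) modnDr modn_small //; lia.
Qed.

Lemma gap_ge2 t : 2 * m < n -> 2 <= gap t.+1.
Proof.
move=> lt_2m_n; rewrite gapS.
have : 2 <= n %/ m by rewrite leq_divRL //; lia.
lia.
Qed.

Lemma resid_gt0 k : coprime m n -> 0 < k < m -> 0 < resid k.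
Proof.
move=> co_mn /andP[k_gt0 lt_km]; rewrite lt0n; apply: contraTneq lt_km => rk0.
by rewrite -leqNgt dvdn_leq // -(Gauss_dvdl _ co_mn); apply/eqP.
Qed.

Lemma resid_predm : coprime m n -> 1 < m -> resid m.-1 + n %% m = m.
Proof.
move=> co_mn m_gt1.
have n_gt0 : 0 < n %% m.
  by have := @resid_gt0 1 co_mn; rewrite /resid mul1n; apply; rewrite m_gt1.
have : m %| resid m.-1 + n %% m.
  by rewrite /dvdn /resid modnDm -mulSnr prednK // modnMr.
have := ltn_pmod (m.-1 * n) m_gt0; have := ltn_pmod n m_gt0.
by rewrite /resid => ? ? /dvdnP[[|[|q]] eq_q]; lia.
Qed.

Section Shift.

Variable k : nat.

Definition gaps_agree (j : nat) : Prop :=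
  forall t, t < j -> gap t.+1 = gap (k + t).+1.

Lemma resid_shift j : gaps_agree j -> resid (k + j) = resid j + resid k.
Proof.
elim: j => [|j IHj] agree_j; first by rewrite addn0 /resid mul0n mod0n.
have rj := IHj (fun t lt_tj => agree_j t (ltnW lt_tj)).
have := agree_j j (ltnSn j); rewrite !gapS rj addnS !residS rj => /addnI.
by case: leqP; case: leqP; lia.
Qed.

Lemma gap_le_shift j : gaps_agree j -> gap j.+1 <= gap (k + j).+1.
Proof.
move/resid_shift=> rj; rewrite !gapS rj leq_add2l.
by case: leqP; case: leqP; lia.
Qed.

Lemma gap_lt_shift_last :
  coprime m n -> 0 < k < m -> gaps_agree (m.-1 - k) ->
  gap (m.-1 - k).+1 < gap (k + (m.-1 - k)).+1.
Proof.
move=> co_mn k_range agree.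
have m_gt1 : 1 < m by case/andP: k_range; lia.
have rk := resid_gt0 k co_mn k_range.
have k_last : k + (m.-1 - k) = m.-1 by lia.
have rm := resid_predm co_mn m_gt1; rewrite -k_last resid_shift // in rm.
rewrite !gapS resid_shift // rm leqnn ltn_add2l.
by case: leqP => //; lia.
Qed.

Lemma gap_first_difference :
  coprime m n -> 0 < k < m ->
  exists j, [/\ j <= m.-1 - k, gaps_agree j & gap j.+1 < gap (k + j).+1].
Proof.
move=> co_mn k_range.
pose differs t := (t == m.-1 - k) || (gap t.+1 != gap (k + t).+1).
have [|j differs_j min_j] := ex_minnP (ex_intro differs (m.-1 - k) _).
  by rewrite /differs eqxx.
have agree_j : gaps_agree j.
  move=> t lt_tj; apply/eqP; apply: contraTT lt_tj => neq_t.
  by rewrite -leqNgt min_j // /differs neq_t orbT.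
have le_j : j <= m.-1 - k by apply: min_j; rewrite /differs eqxx.
exists j; split=> //; case/orP: differs_j => [/eqP j_last | neq_j].
  by rewrite j_last in agree_j *; apply: gap_lt_shift_last.
by rewrite ltn_neqAle neq_j gap_le_shift.
Qed.

End Shift.

End Gaps.

Section Words.

Variables m n : nat.

Definition blocks_from (k : nat) : seq (nat * seq bool) :=
  [seq (kappa m n i, sep m i) | i <- iota k (m - k + 1)].

Lemma cmnE : cmn m n = true :: blocks (blocks_from 1).
Proof. by rewrite /cmn /tailw /blocks /blocks_from -map_comp. Qed.

Lemma crE r :
  cr m n r = true :: blocks (((kappa m n r).+1, sep m r) :: behead (blocks_from r)).
Proof. by rewrite /cr /tailw /blocks /blocks_from addn1 /= -map_comp. Qed.

Lemma size_blocks_from k : size (blocks_from k) = m - k + 1.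
Proof. by rewrite size_map size_iota. Qed.

Lemma head_sep i : head false (sep m i).
Proof. by rewrite /sep; case: ifP. Qed.

Lemma sep_lt i : i < m -> sep m i = [:: true; true].
Proof. by rewrite /sep => ->. Qed.

Lemma kappa_gap i : 0 < i -> kappa m n i = gap m n i - (if i == 1 then 1 else 2).
Proof.
by rewrite /kappa /gap; case: eqP => [->|//]; rewrite mul1n subnn mul0n div0n subn0.
Qed.

Lemma nth_blocks_from k i : 0 < k -> i <= m - k ->
  nth (0, [::]) (blocks_from k) i =
  (gap m n (k + i) - (if k + i == 1 then 1 else 2), sep m (k + i)).
Proof.
move=> k_gt0 le_i.
by rewrite (nth_map 0) ?size_iota ?addn1 // nth_iota // kappa_gap ?addn_gt0 ?k_gt0.
Qed.

Lemma cmn_lt_cr1 : unimodal_lt (cmn m n) (cr m n 1).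
Proof.
rewrite cmnE crE /blocks_from addn1 /=.
exact: (unimodal_lt_blocks_cat [::]) (head_sep 1).
Qed.

Lemma cmn_lt_cr r : 0 < m -> coprime m n -> 2 * m < n -> 1 < r <= m ->
  unimodal_lt (cmn m n) (cr m n r).
Proof.
move=> m_gt0 co_mn lt_2m_n /andP[r_gt1 le_rm].
have [|j [le_j agree lt_j]] := @gap_first_difference m n m_gt0 r.-1 co_mn.
  by apply/andP; split; lia.
have gap_pred t : gap m n (r.-1 + t).+1 = gap m n (r + t) by congr gap; lia.
rewrite cmnE crE; set L1 := blocks_from 1.
set L2 := (_ :: behead (blocks_from r)).
have nth1 i : i < m ->
    nth (0, [::]) L1 i = (gap m n i.+1 - (if i == 0 then 1 else 2), sep m i.+1).
  by move=> lt_im; rewrite nth_blocks_from // ?add1n ?eqSS //; lia.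
have nth2 i : i <= m - r ->
    nth (0, [::]) L2 i = (gap m n (r + i) - (if i == 0 then 1 else 2), sep m (r + i)).
  case: i => [|i] le_i /=.
    rewrite addn0 kappa_gap ?(ltnW r_gt1) // (gtn_eqF r_gt1).
    have := @gap_ge2 m n m_gt0 r.-1 lt_2m_n; rewrite prednK ?(ltnW r_gt1) //.
    by move=> /subSn <-.
  by rewrite nth_behead nth_blocks_from ?(ltnW r_gt1) // addnS eqSS addn_eq0 gtn_eqF // ltnW.
apply: (@unimodal_lt_blocks _ _ j).
- by rewrite /L1 size_blocks_from; lia.
- by rewrite /L2 /= size_behead size_blocks_from; lia.
- move=> i lt_ij; rewrite nth1 ?nth2; try lia.
  by rewrite agree // gap_pred !sep_lt //; lia.
- by move=> i lt_ij; rewrite nth1 ?sep_lt //; lia.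
- rewrite nth1 ?nth2 /=; try lia.
  by have := @gap_ge2 m n m_gt0 j lt_2m_n; rewrite -gap_pred; case: (j == 0); lia.
- by rewrite nth1 ?head_sep //; lia.
Qed.

End Words.

Theorem lemma4p2 (m n r : nat) :
  0 < m -> coprime m n -> 2 * m < n -> 1 <= r <= m ->
  disagree (cr m n r) (cmn m n) /\ unimodal_lt (cmn m n) (cr m n r).
Proof.
move=> m_gt0 co_mn lt_2m_n /andP[r_gt0 le_rm].
suff lt_c : unimodal_lt (cmn m n) (cr m n r) by split; first exact: unimodal_lt_disagree.
case: (ltngtP r 1) => [|r_gt1|->]; [lia | | exact: cmn_lt_cr1].
by apply: cmn_lt_cr; rewrite ?r_gt1.
Qed.
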